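(* Let $f_0,f_1\in \mathrm{PL}_0(\mathbf{I})$ satisfy $[f_1^{f_0},f_0f_1^{-1}]=1$ and $[f_0f_1^{-1},f_1^{f_0^2}]=1$. If $A$ is an orbital of both $f_0$ and $f_1$, then $f_0$ and $f_1$ commute on $A$, i.e. $(f_0f_1)|_A=(f_1f_0)|_A$.
   Context: $\mathrm{PL}_0(\mathbf{I})$ is the group of orientation-preserving piecewise-linear homeomorphisms of $[0,1]$ with finitely many points of non-differentiability. Functions act on the right: $tf=f(t)$, $fg=g\circ f$, $a^b=b^{-1}ab$, $[a,b]=aba^{-1}b^{-1}$. The orbitals of $f$ are the connected components (open intervals) of $\operatorname{Supp}(f)=\{x: xf\ne x\}$. *)

From Stdlib Require Import Reals.
Open Scope R_scope.

(* Elements of PL_0(I), represented by their action on [0,1] (values of the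
   function outside [0,1] are irrelevant). *)
Definition inI (t : R) : Prop := 0 <= t <= 1.

Definition PL0 (f : R -> R) : Prop :=
  f 0 = 0 /\ f 1 = 1 /\
  (forall x y, 0 <= x -> x < y -> y <= 1 -> f x < f y) /\
  exists (n : nat) (x : nat -> R),
    x O = 0 /\ x n = 1 /\
    (forall i, (i < n)%nat -> x i < x (S i)) /\
    (forall i, (i < n)%nat -> exists m c : R,
        forall t, x i <= t <= x (S i) -> f t = m * t + c).

Definition inverse_on_I (f g : R -> R) : Prop :=
  forall t, inI t -> g (f t) = t /\ f (g t) = t.

(* Right actions: t (f g) = g (f t). *)
Definition rmul (f g : R -> R) : R -> R := fun t => g (f t).

Definition eqI (f g : R -> R) : Prop := forall t, inI t -> f t = g t.

(* a^b = b^{-1} a b, given binv = b^{-1} *)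
Definition conjg (a b binv : R -> R) : R -> R := rmul (rmul binv a) b.

Definition commg (a b ainv binv : R -> R) : R -> R :=
  rmul (rmul (rmul a b) ainv) binv.

Definition Supp (f : R -> R) (x : R) : Prop := inI x /\ f x <> x.

(* connected subsets of R are exactly the convex ones (intervals) *)
Definition convex (A : R -> Prop) : Prop :=
  forall x y z, A x -> A y -> x <= z <= y -> A z.

(* an orbital of f: a connected component of Supp(f) *)
Definition orbital (f : R -> R) (A : R -> Prop) : Prop :=
  (exists x, A x) /\ convex A /\ (forall x, A x -> Supp f x) /\
  (forall B : R -> Prop, convex B -> (forall x, B x -> Supp f x) ->
     (forall x, A x -> B x) -> forall x, B x -> A x).

(* Let p be the left end of A. It is fixed by f0 and f1, and both are affine on a right
   neighbourhood of p. Put E = f1^{f0}, V = f0 f1^{-1} and W = V^{f0^{-1}}. The first relation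
   says that E commutes with V; the second, conjugated by f0^{-1}, says that E commutes with W.
   Slopes at p are conjugation invariant, so V and W agree near p. As E has no fixed point in A,
   a power of E or of E^{-1} moves any point of A as close to p as we like, and commuting with E
   transports V = W to all of A. Finally V = V^{f0^{-1}} on A means f0 f1 = f1 f0 on A. *)

From Stdlib Require Import Reals Lra Lia Classical.
Open Scope R_scope.

Lemma breakpoint_interval (x : nat -> R) (n : nat) (t : R) :
  x O <= t -> t < x n -> exists i, (i < n)%nat /\ x i <= t < x (S i).
Proof.
  intros H0. induction n as [|n IH]; intros Hn; [lra|].
  destruct (Rle_lt_dec (x n) t) as [Hle|Hlt].
  - exists n; split; [lia|lra].
  - destruct (IH Hlt) as [i [Hi Hti]]. exists i; split; [lia|exact Hti].
Qed.

Lemma increasing_seq_le (x : nat -> R) (n : nat) :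
  (forall i, (i < n)%nat -> x i < x (S i)) ->
  forall i j, (i <= j <= n)%nat -> x i <= x j.
Proof.
  intros Hx i j Hij. induction j as [|j IH].
  - replace i with O by lia. lra.
  - destruct (Nat.eq_dec i (S j)) as [->|Hne]; [lra|].
    pose proof (Hx j ltac:(lia)). specialize (IH ltac:(lia)). lra.
Qed.

Lemma breakpoints_in_I (x : nat -> R) (n : nat) :
  x O = 0 -> x n = 1 -> (forall i, (i < n)%nat -> x i < x (S i)) ->
  forall i, (i < n)%nat -> 0 <= x i /\ x (S i) <= 1.
Proof.
  intros Hx0 Hxn Hx i Hi. rewrite <- Hx0, <- Hxn.
  split; apply (increasing_seq_le x n Hx); lia.
Qed.

Lemma PL0_affine_piece f : PL0 f -> forall t, 0 <= t < 1 ->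
  exists b m c, t < b <= 1 /\ forall s, t <= s <= b -> f s = m * s + c.
Proof.
  intros [_ [_ [_ [n [x [Hx0 [Hxn [Hx Hpc]]]]]]]] t Ht.
  destruct (breakpoint_interval x n t) as [i [Hi Hti]]; [lra|lra|].
  destruct (Hpc i Hi) as [m [c Hmc]].
  pose proof (breakpoints_in_I x n Hx0 Hxn Hx i Hi).
  exists (x (S i)), m, c. split; [lra|]. intros s Hs. apply Hmc. lra.
Qed.

Definition mapsI (f : R -> R) : Prop := forall t, inI t -> inI (f t).

Definition incI (f : R -> R) : Prop :=
  forall x y, inI x -> inI y -> x < y -> f x < f y.

Lemma incI_le f x y : incI f -> inI x -> inI y -> x <= y -> f x <= f y.
Proof.
  intros Hf Hx Hy Hxy. destruct (Rle_lt_or_eq_dec x y Hxy) as [H|<-]; [|lra].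
  left; auto.
Qed.

Lemma PL0_incI f : PL0 f -> incI f.
Proof. intros [_ [_ [Hf _]]] x y Hx Hy Hxy. unfold inI in *. apply Hf; lra. Qed.

Lemma PL0_mapsI f : PL0 f -> mapsI f.
Proof.
  intros Hf t Ht. pose proof (PL0_incI f Hf) as Hinc. destruct Hf as [H0 [H1 _]].
  pose proof (incI_le f 0 t Hinc ltac:(unfold inI; lra) Ht (proj1 Ht)).
  pose proof (incI_le f t 1 Hinc Ht ltac:(unfold inI; lra) (proj2 Ht)).
  unfold inI; lra.
Qed.

Lemma PL0_surjective f : PL0 f -> forall t, inI t -> exists u, inI u /\ f u = t.
Proof.
  intros Hf t Ht. pose proof (PL0_incI f Hf) as Hinc.
  destruct Hf as [H0 [H1 [_ [n [x [Hx0 [Hxn [Hx Hpc]]]]]]]].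
  destruct (Req_dec t 1) as [->|Ht1]; [exists 1; split; [unfold inI; lra|exact H1]|].
  destruct (breakpoint_interval (fun k => f (x k)) n t) as [i [Hi Hti]]; simpl.
  { rewrite Hx0, H0. unfold inI in Ht; lra. }
  { rewrite Hxn, H1. unfold inI in Ht; lra. }
  destruct (Hpc i Hi) as [m [c Hmc]].
  pose proof (Hx i Hi). pose proof (breakpoints_in_I x n Hx0 Hxn Hx i Hi).
  rewrite (Hmc (x i)), (Hmc (x (S i))) in Hti by lra.
  assert (Hm : 0 < m) by nra.
  set (u := (t - c) / m).
  assert (Hu : m * u = t - c) by (unfold u; field; lra).
  assert (x i <= u < x (S i)) by nra.
  exists u. split; [unfold inI; lra|]. rewrite Hmc by lra. lra.
Qed.

Definition invertible_on_I (f g : R -> R) : Prop :=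
  mapsI f /\ mapsI g /\ inverse_on_I f g.

Lemma PL0_invertible f g : PL0 f -> inverse_on_I f g -> invertible_on_I f g.
Proof.
  intros Hf Hfg. split; [exact (PL0_mapsI f Hf)|]. split; [|exact Hfg].
  intros t Ht. destruct (PL0_surjective f Hf t Ht) as [u [Hu <-]].
  rewrite (proj1 (Hfg u Hu)). exact Hu.
Qed.

Lemma invertible_on_I_sym f g : invertible_on_I f g -> invertible_on_I g f.
Proof.
  intros [Hf [Hg Hfg]]. split; [exact Hg|]. split; [exact Hf|].
  intros t Ht. destruct (Hfg t Ht). split; assumption.
Qed.

Lemma invertible_on_I_rmul f g h k :
  invertible_on_I f g -> invertible_on_I h k -> invertible_on_I (rmul f h) (rmul k g).
Proof.
  intros [Hf [Hg Hfg]] [Hh [Hk Hhk]]. unfold rmul.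
  split; [intros t Ht; auto|]. split; [intros t Ht; auto|].
  intros t Ht. split.
  - rewrite (proj1 (Hhk (f t) (Hf t Ht))). exact (proj1 (Hfg t Ht)).
  - rewrite (proj2 (Hfg (k t) (Hk t Ht))). exact (proj2 (Hhk t Ht)).
Qed.

Lemma invertible_on_I_conjg a ai b bi :
  invertible_on_I a ai -> invertible_on_I b bi ->
  invertible_on_I (conjg a b bi) (conjg ai b bi).
Proof.
  intros Ha Hb.
  exact (invertible_on_I_rmul _ _ _ _
           (invertible_on_I_rmul _ _ _ _ (invertible_on_I_sym b bi Hb) Ha) Hb).
Qed.

Lemma incI_inverse f g : incI f -> invertible_on_I f g -> incI g.
Proof.
  intros Hf [_ [Hg Hfg]] x y Hx Hy Hxy. apply Rnot_le_lt. intros Hle.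
  pose proof (incI_le f _ _ Hf (Hg y Hy) (Hg x Hx) Hle).
  rewrite (proj2 (Hfg x Hx)), (proj2 (Hfg y Hy)) in H. lra.
Qed.

Lemma incI_rmul f g : incI f -> incI g -> mapsI f -> incI (rmul f g).
Proof. intros Hf Hg HfI x y Hx Hy Hxy. unfold rmul. auto. Qed.

Lemma incI_conjg a b bi : incI a -> mapsI a -> incI b -> invertible_on_I b bi ->
  incI (conjg a b bi).
Proof.
  intros Ha HaI Hb Hbbi. pose proof Hbbi as [_ [HbiI _]].
  apply incI_rmul; [|exact Hb|intros t Ht; unfold rmul; auto].
  apply incI_rmul; [exact (incI_inverse b bi Hb Hbbi)|exact Ha|exact HbiI].
Qed.

Lemma commg_trivial_commute a ai b bi :
  invertible_on_I a ai -> invertible_on_I b bi ->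
  eqI (commg a b ai bi) (fun t => t) -> forall t, inI t -> rmul a b t = rmul b a t.
Proof.
  intros [Ha [Hai Haai]] [Hb [Hbi Hbbi]] Hc t Ht. unfold eqI, commg, rmul in *.
  assert (Hba : ai (b (a t)) = b t).
  { rewrite <- (Hc t Ht) at 2. symmetry. apply Hbbi. auto. }
  rewrite <- Hba. symmetry. apply Haai. auto.
Qed.

Definition right_germ (p : R) (f : R -> R) (m : R) : Prop :=
  0 < m /\ exists d, 0 < d /\ p + d <= 1 /\
    forall s, p <= s <= p + d -> f s = p + m * (s - p).

Lemma PL0_right_germ f p : PL0 f -> 0 <= p < 1 -> f p = p -> exists m, right_germ p f m.
Proof.
  intros Hf Hp Hfp.
  destruct (PL0_affine_piece f Hf p Hp) as [b [m [c [Hb Hmc]]]].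
  assert (Hfb : f p < f b) by (apply (PL0_incI f Hf); unfold inI; lra).
  rewrite (Hmc p) in Hfp, Hfb by lra. rewrite (Hmc b) in Hfb by lra.
  exists m. split; [nra|]. exists (b - p). split; [lra|]. split; [lra|].
  intros s Hs. rewrite Hmc by lra. lra.
Qed.

Lemma right_germ_rmul p f g m k :
  right_germ p f m -> right_germ p g k -> right_germ p (rmul f g) (m * k).
Proof.
  intros [Hm [df [Hdf [Hdf1 Hf]]]] [Hk [dg [Hdg [Hdg1 Hg]]]].
  split; [nra|]. unfold rmul.
  assert (Hdgm : 0 < dg / m) by (apply Rdiv_lt_0_compat; lra).
  exists (Rmin df (dg / m)). split; [apply Rmin_glb_lt; lra|].
  pose proof (Rmin_l df (dg / m)). pose proof (Rmin_r df (dg / m)).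
  split; [lra|]. intros s Hs. rewrite Hf by lra.
  assert (m * (s - p) <= dg).
  { replace dg with (m * (dg / m)) by (field; lra). apply Rmult_le_compat_l; lra. }
  rewrite Hg by nra. ring.
Qed.

Lemma right_germ_inverse p f g m :
  0 <= p -> right_germ p f m -> inverse_on_I f g -> right_germ p g (/ m).
Proof.
  intros Hp [Hm [df [Hdf [Hdf1 Hf]]]] Hfg.
  split; [apply Rinv_0_lt_compat; lra|].
  exists (Rmin (m * df) df). split; [apply Rmin_glb_lt; nra|].
  pose proof (Rmin_l (m * df) df). pose proof (Rmin_r (m * df) df).
  split; [lra|]. intros u Hu.
  set (v := p + (u - p) / m).
  assert (Hv : 0 <= (u - p) / m <= df).
  { split; [unfold Rdiv; apply Rmult_le_pos; [lra|left; apply Rinv_0_lt_compat; lra]|].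
    apply Rmult_le_reg_l with m; [lra|].
    replace (m * ((u - p) / m)) with (u - p) by (field; lra). lra. }
  assert (Hfv : f v = u) by (unfold v; rewrite Hf by lra; field; lra).
  rewrite <- Hfv at 1. rewrite (proj1 (Hfg v ltac:(unfold inI, v; lra))).
  unfold v. field; lra.
Qed.

Lemma right_germ_conjg p a b bi k m :
  0 <= p -> right_germ p a k -> right_germ p b m -> inverse_on_I b bi ->
  right_germ p (conjg a b bi) k.
Proof.
  intros Hp Ha Hb Hbbi. pose proof (proj1 Hb) as Hm.
  replace k with (/ m * k * m) by (field; lra).
  apply right_germ_rmul; [|exact Hb].
  apply right_germ_rmul; [|exact Ha].
  exact (right_germ_inverse p b bi m Hp Hb Hbbi).
Qed.

Lemma right_germ_agree p f g m :
  right_germ p f m -> right_germ p g m ->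
  exists d, 0 < d /\ forall s, p <= s <= p + d -> f s = g s.
Proof.
  intros [_ [df [Hdf [_ Hf]]]] [_ [dg [Hdg [_ Hg]]]].
  exists (Rmin df dg). split; [apply Rmin_glb_lt; lra|].
  pose proof (Rmin_l df dg). pose proof (Rmin_r df dg).
  intros s Hs. rewrite Hf, Hg by lra. reflexivity.
Qed.

Definition stable (A : R -> Prop) (f : R -> R) : Prop := forall x, A x -> A (f x).

Lemma stable_iter A f : stable A f -> forall n, stable A (Nat.iter n f).
Proof. intros Hf n. induction n as [|n IH]; intros x Hx; simpl; auto. Qed.

Lemma stable_conjg A a b bi : stable A a -> stable A b -> stable A bi ->
  stable A (conjg a b bi).
Proof. intros Ha Hb Hbi x Hx. unfold conjg, rmul. auto. Qed.

Lemma conjg_free A a b bi : (forall x, A x -> inI x) -> mapsI a ->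
  invertible_on_I b bi -> stable A bi -> (forall x, A x -> a x <> x) ->
  forall x, A x -> conjg a b bi x <> x.
Proof.
  intros HAI Ha [Hb [Hbi Hbbi]] Hstab Hfree x Hx Hfix. unfold conjg, rmul in Hfix.
  apply (Hfree (bi x) (Hstab x Hx)).
  rewrite <- (proj1 (Hbbi _ (Ha _ (Hbi _ (HAI x Hx))))), Hfix. reflexivity.
Qed.

Definition is_inf (A : R -> Prop) (p : R) : Prop :=
  (forall x, A x -> p <= x) /\ (forall y, p < y -> exists x, A x /\ x < y).

Lemma inf_exists (A : R -> Prop) :
  (exists x, A x) -> (exists b, forall x, A x -> b <= x) -> exists p, is_inf A p.
Proof.
  intros [x0 Hx0] [b Hb].
  destruct (completeness (fun z => A (- z))) as [M [HM1 HM2]].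
  - exists (- b). intros z Hz. specialize (Hb _ Hz). lra.
  - exists (- x0). rewrite Ropp_involutive. exact Hx0.
  - exists (- M). split.
    + intros x Hx. assert (HM : - x <= M) by (apply HM1; rewrite Ropp_involutive; exact Hx). lra.
    + intros y Hy. apply NNPP. intros Hn.
      assert (Hub : is_upper_bound (fun z => A (- z)) (- y)).
      { intros z Hz. apply Rnot_lt_le. intros Hlt. apply Hn. exists (- z). split; [exact Hz|lra]. }
      specialize (HM2 _ Hub). lra.
Qed.

Lemma orbital_in_I f A : orbital f A -> forall x, A x -> inI x.
Proof. intros [_ [_ [HS _]]] x Hx. exact (proj1 (HS x Hx)). Qed.

Lemma orbital_free f A : orbital f A -> forall x, A x -> f x <> x.
Proof. intros [_ [_ [HS _]]] x Hx. exact (proj2 (HS x Hx)). Qed.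

Lemma orbital_has_inf f A : orbital f A -> exists p, is_inf A p.
Proof.
  intros HA. apply inf_exists; [exact (proj1 HA)|].
  exists 0. intros x Hx. exact (proj1 (orbital_in_I f A HA x Hx)).
Qed.

Lemma orbital_absorbs_interval f A t lo hi : orbital f A -> A t -> lo <= t <= hi ->
  (forall y, lo <= y <= hi -> Supp f y) -> forall y, lo <= y <= hi -> A y.
Proof.
  intros [_ [Hc [HS Hmax]]] Ht Hlt Hint y Hy.
  apply (Hmax (fun z => A z \/ lo <= z <= hi)); [| |intros x Hx; left; exact Hx|right; exact Hy].
  - intros x z w [Hx|Hx] [Hz|Hz] Hw.
    + left; exact (Hc x z w Hx Hz Hw).
    + destruct (Rle_lt_dec lo w); [right; lra|left; apply (Hc x t w Hx Ht); lra].
    + destruct (Rle_lt_dec w hi); [right; lra|left; apply (Hc t z w Ht Hz); lra].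
    + right; lra.
  - intros x [Hx|Hx]; [exact (HS x Hx)|exact (Hint x Hx)].
Qed.

Lemma Supp_between f u : incI f -> mapsI f -> Supp f u ->
  forall y, Rmin u (f u) <= y <= Rmax u (f u) -> Supp f y.
Proof.
  intros Hinc HfI [Hu Hfu] y. pose proof (HfI u Hu) as Hfu'. unfold inI in *.
  unfold Rmin, Rmax. destruct (Rle_dec u (f u)) as [Hle|Hlt]; intros Hy.
  - split; [unfold inI; lra|]. destruct (Req_dec y u) as [->|Hne]; [exact Hfu|].
    assert (f u < f y) by (apply Hinc; unfold inI; lra). lra.
  - split; [unfold inI; lra|]. destruct (Req_dec y u) as [->|Hne]; [exact Hfu|].
    assert (f y < f u) by (apply Hinc; unfold inI; lra). lra.
Qed.

Lemma orbital_stable f g A : PL0 f -> inverse_on_I f g -> orbital f A ->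
  stable A f /\ stable A g.
Proof.
  intros Hf Hfg HA.
  destruct (PL0_invertible f g Hf Hfg) as [HfI [HgI _]].
  pose proof (PL0_incI f Hf) as Hinc. pose proof HA as [_ [_ [HS _]]].
  split; intros t Ht; destruct (HS t Ht) as [HtI Hft].
  - pose proof (Rmin_l t (f t)). pose proof (Rmax_l t (f t)).
    pose proof (Rmin_r t (f t)). pose proof (Rmax_r t (f t)).
    apply (orbital_absorbs_interval f A t (Rmin t (f t)) (Rmax t (f t)) HA Ht);
      [lra|exact (Supp_between f t Hinc HfI (HS t Ht))|lra].
  - assert (Hgt : f (g t) = t) by exact (proj2 (Hfg t HtI)).
    assert (HSg : Supp f (g t)).
    { split; [exact (HgI t HtI)|]. intros E. rewrite Hgt in E.
      apply Hft. rewrite E at 1. exact Hgt. }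
    pose proof (Supp_between f (g t) Hinc HfI HSg) as Hbet. rewrite Hgt in Hbet.
    pose proof (Rmin_l (g t) t). pose proof (Rmax_l (g t) t).
    pose proof (Rmin_r (g t) t). pose proof (Rmax_r (g t) t).
    apply (orbital_absorbs_interval f A t (Rmin (g t) t) (Rmax (g t) t) HA Ht);
      [lra|exact Hbet|lra].
Qed.

Lemma orbital_inf_fixed f g A p : PL0 f -> inverse_on_I f g -> orbital f A ->
  is_inf A p -> 0 <= p < 1 /\ f p = p.
Proof.
  intros Hf Hfg HA [Hlb Hglb].
  pose proof HA as [[a0 Ha0] [Hc [HS _]]].
  pose proof (orbital_in_I f A HA) as HAI.
  destruct (HS a0 Ha0) as [Ha0I Hfa0].
  assert (Ha01 : a0 <> 1) by (intros ->; exact (Hfa0 (proj1 (proj2 Hf)))).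
  pose proof (Hlb a0 Ha0).
  assert (Hp0 : 0 <= p).
  { apply Rnot_lt_le. intros Hlt. destruct (Hglb 0 Hlt) as [a [Ha Ha0']].
    pose proof (HAI a Ha). unfold inI in *. lra. }
  assert (HpI : inI p) by (unfold inI in *; lra).
  split; [unfold inI in *; lra|].
  apply NNPP. intros Hfp.
  assert (HAp : A p).
  { apply (orbital_absorbs_interval f A a0 p a0 HA Ha0 ltac:(lra)); [|lra].
    intros y Hy. destruct (Req_dec y p) as [->|Hne]; [split; assumption|].
    destruct (Hglb y ltac:(lra)) as [a [Ha Hay]].
    apply HS, (Hc a a0 y Ha Ha0). lra. }
  (* [p] would lie in [A] with both [f p] and [g p] to its right, impossible for inverse maps. *)
  destruct (orbital_stable f g A Hf Hfg HA) as [Hsf Hsg].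
  pose proof (Hlb _ (Hsf p HAp)). pose proof (Hlb _ (Hsg p HAp)).
  destruct (Hfg p HpI) as [_ Hfgp].
  assert (Hgp : g p <> p) by (intros E; rewrite E in Hfgp; contradiction).
  assert (f p < f (g p))
    by (apply (PL0_incI f Hf); [exact HpI|exact (HAI _ (Hsg p HAp))|lra]).
  lra.
Qed.

Section Descent.

Variables (A : R -> Prop) (p : R) (F G : R -> R).
Hypotheses (A_in_I : forall x, A x -> inI x) (A_inf : is_inf A p) (A_convex : convex A).
Hypotheses (F_inc : incI F) (FG : invertible_on_I F G).
Hypotheses (F_stable : stable A F) (F_free : forall x, A x -> F x <> x).

(* Otherwise the infimum of the iterates would be a point of [A] fixed by [F]. *)
Lemma iterates_approach_inf t e : 0 < e -> A t -> F t < t ->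
  exists n, Nat.iter n F t <= p + e.
Proof.
  intros He Ht Hlt. destruct A_inf as [Hlb Hglb].
  destruct FG as [_ [HGI HFG]].
  apply NNPP; intros Hn.
  assert (Hall : forall n, p + e < Nat.iter n F t).
  { intros n. apply Rnot_le_lt. intros Hle. apply Hn. exists n; exact Hle. }
  destruct (inf_exists (fun y => exists n, y = Nat.iter n F t)) as [L [HL1 HL2]].
  { exists t, 0%nat; reflexivity. }
  { exists p. intros x [n ->]. specialize (Hall n); lra. }
  assert (HLt : L <= t) by (apply HL1; exists 0%nat; reflexivity).
  assert (HLpe : p + e <= L).
  { apply Rnot_lt_le; intros HLlt. destruct (HL2 _ HLlt) as [x [[n ->] Hx]].
    specialize (Hall n). lra. }
  assert (HAL : A L).
  { destruct (Hglb L ltac:(lra)) as [a [Ha Hal]].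
    apply (A_convex a t L Ha Ht). pose proof (Hlb a Ha). lra. }
  pose proof (A_in_I _ HAL) as HLI.
  assert (HitI : forall n, inI (Nat.iter n F t)) by (intros n; apply A_in_I, stable_iter; auto).
  destruct (Rtotal_order (F L) L) as [HFL|[HFL|HFL]].
  - destruct (HFG L HLI) as [_ HFGL].
    assert (HGL : L < G L).
    { destruct (Rtotal_order L (G L)) as [H|[H|H]]; auto.
      - rewrite <- H in HFGL. lra.
      - assert (F (G L) < F L) by (apply F_inc; auto). lra. }
    destruct (HL2 _ HGL) as [x [[n ->] Hx]].
    assert (F (Nat.iter n F t) < F (G L)) by (apply F_inc; auto).
    assert (L <= Nat.iter (S n) F t) by (apply HL1; exists (S n); reflexivity).
    simpl in *. lra.
  - exact (F_free L HAL HFL).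
  - assert (Hbound : forall x, (exists n, x = Nat.iter n F t) -> F L <= x).
    { intros x [[|n] ->]; simpl.
      - pose proof (incI_le F L t F_inc HLI (A_in_I t Ht) HLt). lra.
      - apply incI_le; auto. apply HL1. exists n; reflexivity. }
    destruct (HL2 (F L) HFL) as [x [Hx Hx2]]. specialize (Hbound x Hx). lra.
Qed.

End Descent.

Lemma commute_inverse F G V : invertible_on_I F G -> mapsI V ->
  (forall u, inI u -> V (F u) = F (V u)) -> forall u, inI u -> V (G u) = G (V u).
Proof.
  intros [HF [HG HFG]] HV H u Hu.
  rewrite <- (proj1 (HFG (V (G u)) ltac:(auto))), <- H by auto.
  rewrite (proj2 (HFG u Hu)). reflexivity.
Qed.

Lemma agree_of_iter_agree F G V W : invertible_on_I F G -> mapsI V -> mapsI W ->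
  (forall u, inI u -> V (F u) = F (V u)) -> (forall u, inI u -> W (F u) = F (W u)) ->
  forall n t, inI t -> V (Nat.iter n F t) = W (Nat.iter n F t) -> V t = W t.
Proof.
  intros [HF [HG HFG]] HV HW HVF HWF n. induction n as [|n IH]; intros t Ht H; [exact H|].
  apply IH; [exact Ht|].
  assert (Hu : inI (Nat.iter n F t)).
  { clear IH H. induction n as [|n IHn]; simpl; auto. }
  simpl in H. rewrite HVF, HWF in H by exact Hu.
  rewrite <- (proj1 (HFG _ (HV _ Hu))), <- (proj1 (HFG _ (HW _ Hu))), H. reflexivity.
Qed.

Section AgreeOnOrbital.

Variables (A : R -> Prop) (p d : R) (E Ei V W : R -> R).
Hypotheses (A_in_I : forall x, A x -> inI x) (A_inf : is_inf A p) (A_convex : convex A).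
Hypotheses (E_inc : incI E) (E_Ei : invertible_on_I E Ei).
Hypotheses (E_stable : stable A E) (Ei_stable : stable A Ei).
Hypotheses (E_free : forall x, A x -> E x <> x).
Hypotheses (V_maps : mapsI V) (W_maps : mapsI W).
Hypotheses (VE : forall u, inI u -> V (E u) = E (V u)).
Hypotheses (WE : forall u, inI u -> W (E u) = E (W u)).
Hypotheses (d_pos : 0 < d) (VW_near : forall s, p <= s <= p + d -> V s = W s).

Lemma agree_on_orbital t : A t -> V t = W t.
Proof.
  intros Ht. pose proof (proj1 A_inf) as Hlb.
  pose proof E_Ei as [_ [_ HEEi]].
  pose proof (invertible_on_I_sym E Ei E_Ei) as Ei_E.
  assert (Ei_free : forall x, A x -> Ei x <> x).
  { intros x Hx Hfix. apply (E_free x Hx). rewrite <- Hfix at 1.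
    exact (proj2 (HEEi x (A_in_I x Hx))). }
  assert (Hnear : forall F, stable A F -> forall n, Nat.iter n F t <= p + d ->
            V (Nat.iter n F t) = W (Nat.iter n F t)).
  { intros F HF n Hn. apply VW_near. split; [|exact Hn].
    apply Hlb, stable_iter; assumption. }
  destruct (Rtotal_order (E t) t) as [Hlt|[Heq|Hgt]].
  - destruct (iterates_approach_inf A p E Ei A_in_I A_inf A_convex E_inc E_Ei
                E_stable E_free t d d_pos Ht Hlt) as [n Hn].
    exact (agree_of_iter_agree E Ei V W E_Ei V_maps W_maps VE WE n t (A_in_I t Ht)
             (Hnear E E_stable n Hn)).
  - exfalso; exact (E_free t Ht Heq).
  - assert (Hlt : Ei t < t).
    { apply Rnot_le_lt. intros Hle.
      pose proof (incI_le E _ _ E_inc (A_in_I t Ht) (A_in_I _ (Ei_stable t Ht)) Hle).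
      rewrite (proj2 (HEEi t (A_in_I t Ht))) in H. lra. }
    destruct (iterates_approach_inf A p Ei E A_in_I A_inf A_convex
                (incI_inverse E Ei E_inc E_Ei) Ei_E Ei_stable Ei_free t d d_pos Ht Hlt)
      as [n Hn].
    exact (agree_of_iter_agree Ei E V W Ei_E V_maps W_maps
             (commute_inverse E Ei V E_Ei V_maps VE) (commute_inverse E Ei W E_Ei W_maps WE)
             n t (A_in_I t Ht) (Hnear Ei Ei_stable n Hn)).
Qed.

End AgreeOnOrbital.

Lemma commute_conjg_swap a b c ci : invertible_on_I c ci -> mapsI a -> mapsI b ->
  (forall t, inI t -> rmul a (conjg b c ci) t = rmul (conjg b c ci) a t) ->
  forall t, inI t -> rmul b (conjg a ci c) t = rmul (conjg a ci c) b t.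
Proof.
  intros [Hc [Hci Hcci]] Ha Hb H t Ht. unfold conjg, rmul in *.
  specialize (H (c t) (Hc t Ht)). rewrite (proj1 (Hcci t Ht)) in H.
  rewrite <- H, (proj1 (Hcci _ (Hb _ (Hci _ (Ha _ (Hc t Ht)))))). reflexivity.
Qed.

Lemma quotient_conjg_agree_near f0 g0 f1 g1 p : PL0 f0 -> PL0 f1 ->
  inverse_on_I f0 g0 -> inverse_on_I f1 g1 -> 0 <= p < 1 -> f0 p = p -> f1 p = p ->
  exists d, 0 < d /\ forall s, p <= s <= p + d ->
    rmul f0 g1 s = conjg (rmul f0 g1) g0 f0 s.
Proof.
  intros P0 P1 I0 I1 Hp Hf0 Hf1.
  destruct (PL0_right_germ f0 p P0 Hp Hf0) as [m0 G0].
  destruct (PL0_right_germ f1 p P1 Hp Hf1) as [m1 G1].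
  assert (GV : right_germ p (rmul f0 g1) (m0 * / m1)).
  { apply right_germ_rmul; [exact G0|]. exact (right_germ_inverse p f1 g1 m1 (proj1 Hp) G1 I1). }
  apply (right_germ_agree p _ _ _ GV).
  apply (right_germ_conjg p _ g0 f0 _ (/ m0) (proj1 Hp) GV).
  - exact (right_germ_inverse p f0 g0 m0 (proj1 Hp) G0 I0).
  - destruct (invertible_on_I_sym f0 g0 (PL0_invertible f0 g0 P0 I0)) as [_ [_ H]]. exact H.
Qed.

Lemma commute_of_conjg_quotient f0 g0 f1 g1 t :
  invertible_on_I f0 g0 -> invertible_on_I f1 g1 -> inI t ->
  rmul f0 g1 (g0 (f1 t)) = conjg (rmul f0 g1) g0 f0 (g0 (f1 t)) ->
  rmul f0 f1 t = rmul f1 f0 t.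
Proof.
  intros [Hf0 [Hg0 H0]] [Hf1 [Hg1 H1]] Ht. unfold conjg, rmul.
  rewrite (proj2 (H0 _ (Hf1 t Ht))), (proj1 (H1 t Ht)). intros Hq.
  rewrite Hq at 1.
  rewrite (proj2 (H0 _ (Hg1 _ (Hf0 _ (Hf1 t Ht))))), (proj2 (H1 _ (Hf0 _ (Hf1 t Ht)))).
  reflexivity.
Qed.

Theorem lemma2p2 (f0 f1 g0 g1 : R -> R) (A : R -> Prop) :
  PL0 f0 -> PL0 f1 ->
  inverse_on_I f0 g0 -> inverse_on_I f1 g1 ->
  (* [f1^{f0}, f0 f1^{-1}] = 1 *)
  eqI (commg (conjg f1 f0 g0) (rmul f0 g1) (conjg g1 f0 g0) (rmul f1 g0))
      (fun t => t) ->
  (* [f0 f1^{-1}, f1^{f0^2}] = 1 *)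
  eqI (commg (rmul f0 g1) (conjg f1 (rmul f0 f0) (rmul g0 g0))
             (rmul f1 g0) (conjg g1 (rmul f0 f0) (rmul g0 g0)))
      (fun t => t) ->
  orbital f0 A -> orbital f1 A ->
  forall t, A t -> rmul f0 f1 t = rmul f1 f0 t.
Proof.
  intros P0 P1 I0 I1 H1 H2 O0 O1.
  pose proof (PL0_invertible f0 g0 P0 I0) as U0.
  pose proof (PL0_invertible f1 g1 P1 I1) as U1.
  pose proof (invertible_on_I_rmul _ _ _ _ U0 (invertible_on_I_sym _ _ U1)) as UV.
  pose proof (invertible_on_I_conjg _ _ _ _ U1 U0) as UE.
  pose proof (invertible_on_I_conjg _ _ _ _ U1 (invertible_on_I_rmul _ _ _ _ U0 U0)) as UE2.
  pose proof (orbital_stable f0 g0 A P0 I0 O0) as [S_f0 S_g0].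
  pose proof (orbital_stable f1 g1 A P1 I1 O1) as [S_f1 S_g1].
  pose proof (orbital_in_I f0 A O0) as A_in_I.
  pose proof O0 as [_ [A_convex _]].
  destruct (orbital_has_inf f0 A O0) as [p A_inf].
  destruct (orbital_inf_fixed f0 g0 A p P0 I0 O0 A_inf) as [Hp Hf0p].
  destruct (orbital_inf_fixed f1 g1 A p P1 I1 O1 A_inf) as [_ Hf1p].
  destruct (quotient_conjg_agree_near f0 g0 f1 g1 p P0 P1 I0 I1 Hp Hf0p Hf1p) as [d [Hd Hnear]].
  assert (VE := commg_trivial_commute _ _ _ _ UE UV H1).
  assert (WE := commute_conjg_swap _ _ f0 g0 U0 (proj1 UV) (proj1 UE)
                  (commg_trivial_commute _ _ _ _ UV UE2 H2)).
  intros t Ht. apply (commute_of_conjg_quotient f0 g0 f1 g1 t U0 U1 (A_in_I t Ht)).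
  apply (agree_on_orbital A p d (conjg f1 f0 g0) (conjg g1 f0 g0)); try assumption.
  - exact (incI_conjg _ _ _ (PL0_incI f1 P1) (proj1 U1) (PL0_incI f0 P0) U0).
  - apply stable_conjg; assumption.
  - apply stable_conjg; assumption.
  - exact (conjg_free A f1 f0 g0 A_in_I (proj1 U1) U0 S_g0 (orbital_free f1 A O1)).
  - exact (proj1 UV).
  - exact (proj1 (invertible_on_I_conjg _ _ _ _ UV (invertible_on_I_sym _ _ U0))).
  - exact (S_g0 _ (S_f1 t Ht)).
Qed.
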